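(* Let $s\ge1$ and $n\ge k\ge0$ be integers, $\mathcal A$ a linear $[n,k]_q$ code, and $A_n^{\mathcal A}$ the number of codewords of $\mathcal A$ of Hamming weight $n$. Let $\boldsymbol E$ be chosen uniformly at random from the set of matrices in $\mathbb F_q^{s\times n}$ having no all-zero column. Then $$\Pr\{\text{every row of }\boldsymbol E\text{ lies in }\mathcal A\}\le\frac{q^{ks}(q-1)-(q^s-1)(q^k-1-A_n^{\mathcal A})-(q-1)}{(q-1)(q^s-1)^n}.$$ *)

From HB Require Import structures.
From mathcomp Require Import all_boot all_order all_algebra all_field.
Set Implicit Arguments. Unset Strict Implicit. Unset Printing Implicit Defensive.
Import Order.TTheory GRing.Theory Num.Theory.
Local Open Scope ring_scope.

Definition hweight (F : finFieldType) (n : nat) (c : 'rV[F]_n) : nat :=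
  #|[set j : 'I_n | c 0 j != 0]|.

(* A linear [n,k]_q code is a subspace A of F^n = 'rV[F]_n with \dim A = k. *)
Definition full_weight_count (F : finFieldType) (n : nat)
  (A : {vspace 'rV[F]_n}) : nat :=
  #|[set c : 'rV[F]_n | (c \in A) && (hweight c == n)]|.

Definition no_zero_col (F : finFieldType) (s n : nat) (E : 'M[F]_(s, n)) : bool :=
  [forall j : 'I_n, col j E != 0].

Definition rows_in (F : finFieldType) (s n : nat) (A : {vspace 'rV[F]_n})
  (E : 'M[F]_(s, n)) : bool :=
  [forall i : 'I_s, row i E \in A].

Definition prob_rows_in (F : finFieldType) (s n : nat)
  (A : {vspace 'rV[F]_n}) : rat :=
  (#|[set E : 'M[F]_(s, n) | no_zero_col E && rows_in A E]|)%:R /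
  (#|[set E : 'M[F]_(s, n) | no_zero_col E]|)%:R.

From HB Require Import structures.
From mathcomp Require Import all_boot all_order all_algebra all_field.
From mathcomp Require Import lra.
Import Order.TTheory GRing.Theory Num.Theory.
Set Implicit Arguments. Unset Strict Implicit.
Local Open Scope ring_scope.

(* Among the q^(ks) matrices whose rows lie in A, besides the good ones (no
   zero column) there is the zero matrix and every rank-one matrix a c with
   a <> 0 in F^s and c a nonzero codeword of weight < n: such a c vanishes
   somewhere, so a c has a zero column.  There are q^k - 1 - A_n such c, and
   a c determines the pair (a, c) up to a factor in F^*, which yields at least
   (q^s - 1)(q^k - 1 - A_n)/(q - 1) such matrices.  Dividing by the number
   (q^s - 1)^n of matrices without zero column gives the bound. *)

Lemma mx_neq0_entry (R : nmodType) m p (M : 'M[R]_(m, p)) :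
  M != 0 -> exists i j, M i j != 0.
Proof.
move=> M0; case: (pickP (fun ij : 'I_m * 'I_p => M ij.1 ij.2 != 0)).
  by move=> [i j] Mij; exists i, j.
move=> Mnz; case/eqP: M0; apply/matrixP => i j; rewrite mxE.
by have /negbFE/eqP := Mnz (i, j).
Qed.

Section RankOne.
Variables (F : fieldType) (s n : nat).
Implicit Types (a : 'cV[F]_s) (c : 'rV[F]_n) (M : 'M[F]_(s, n)).

Lemma row_mul_col_row a c i : row i (a *m c) = a i 0 *: c.
Proof. by apply/rowP => j; rewrite !mxE big_ord1. Qed.

Lemma col_mul_col_row a c j : col j (a *m c) = c 0 j *: a.
Proof. by apply/colP => i; rewrite !mxE big_ord1 mulrC. Qed.

Definition pivot M := [pick j | col j M != 0].

Lemma pivot_mul_col_row a c : a != 0 -> pivot (a *m c) = [pick j | c 0 j != 0].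
Proof.
by move=> a0; apply: eq_pick => j; rewrite /= col_mul_col_row scaler_eq0 (negPf a0) orbF.
Qed.

(* A rank-one matrix determines its factors once the scalar freedom is removed
   by recording the entry of the row factor at the first nonzero column. *)
Definition rank_one_code (p : 'cV[F]_s * 'rV[F]_n) : 'M[F]_(s, n) * F :=
  (p.1 *m p.2, oapp (fun j => p.2 0 j) 0 (pivot (p.1 *m p.2))).

Lemma rank_one_code_inj a a' c c' : a != 0 -> c != 0 ->
  rank_one_code (a, c) = rank_one_code (a', c') -> (a, c) = (a', c').
Proof.
move=> a0 c0 [eqM]; rewrite /= -eqM pivot_mul_col_row //.
case: pickP => [j /= cj0 eqcj | nzc _]; last first.
  have [i [j cij]] := mx_neq0_entry c0.
  by rewrite (ord1 i) nzc in cij.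
have eqa : a = a'.
  apply: (scalerI cj0).
  by rewrite -col_mul_col_row [in RHS]eqcj -col_mul_col_row eqM.
subst a'; have [i [j' ai0]] := mx_neq0_entry a0; rewrite (ord1 j') in ai0.
by congr (_, _); apply: (scalerI ai0); rewrite -!row_mul_col_row eqM.
Qed.

End RankOne.

Section Counting.
Variables (F : finFieldType) (s n : nat).

Lemma card_no_zero_col_ge :
  ((#|F| ^ s).-1 ^ n <= #|[set E : 'M[F]_(s, n) | no_zero_col E]|)%N.
Proof.
pose mk (f : {ffun 'I_n -> 'cV[F]_s}) : 'M[F]_(s, n) := \matrix_(i, j) f j i 0.
have col_mk f j : col j (mk f) = f j by apply/colP => i; rewrite !mxE.
have mk_inj : injective mk by move=> f f' eqf; apply/ffunP => j; rewrite -!col_mk eqf.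
have -> : (#|F| ^ s).-1 = #|predC1 (0 : 'cV[F]_s)|.
  by rewrite cardC1 card_mx muln1.
rewrite -[n in (_ ^ n)%N]card_ord -card_ffun_on -(card_imset _ mk_inj).
apply: subset_leq_card; apply/subsetP => M /imsetP [f /ffun_onP f_nz -> {M}].
by rewrite inE; apply/forallP => j; rewrite col_mk; apply: f_nz.
Qed.

Variable A : {vspace 'rV[F]_n}.

Lemma card_rows_in_le :
  (#|[set E : 'M[F]_(s, n) | rows_in A E]| <= (#|F| ^ \dim A) ^ s)%N.
Proof.
pose rows (E : 'M[F]_(s, n)) := [ffun i => row i E].
have rows_inj : injective rows.
  by move=> E E' /ffunP eqE; apply/row_matrixP => i; have := eqE i; rewrite !ffunE.
rewrite -(card_imset _ rows_inj) -card_vspace -[s in (_ ^ s)%N]card_ord.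
rewrite -card_ffun_on; apply: subset_leq_card; apply/subsetP => f /imsetP [E].
by rewrite inE => /forallP EA -> {f}; apply/ffun_onP => i; rewrite ffunE.
Qed.

Definition low_weight_codewords :=
  [set c : 'rV[F]_n | [&& c \in A, c != 0 & hweight c != n]].

Definition degenerate_codeword_matrices :=
  [set E : 'M[F]_(s, n) | [&& rows_in A E, ~~ no_zero_col E & E != 0]].

Lemma hweight0 : hweight (0 : 'rV[F]_n) = 0%N.
Proof.
rewrite /hweight (_ : [set j | _] = set0) ?cards0 //.
by apply/setP => j; rewrite !inE mxE eqxx.
Qed.

Lemma hweight_lt_zero_entry (c : 'rV[F]_n) : hweight c != n -> exists j, c 0 j = 0.
Proof.
move=> wc; case: (pickP (fun j => c 0 j == 0)) => [j /eqP|cnz]; first by exists j.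
case/eqP: wc; rewrite /hweight (_ : [set j | _] = setT) ?cardsT ?card_ord //.
by apply/setP => j; rewrite !inE cnz.
Qed.

Lemma card_low_weight_codewords : (0 < n)%N ->
  (#|low_weight_codewords| + full_weight_count A + 1 = #|F| ^ \dim A)%N.
Proof.
move=> n_gt0; rewrite -card_vspace -(cardsE (mem A)).
set S := [set x in mem A]; set W := [set c : 'rV[F]_n | hweight c == n].
have -> : #|low_weight_codewords| = #|S :\ 0 :\: W|.
  by apply: eq_card => c; rewrite !inE; apply/and3P/and3P => -[].
have -> : full_weight_count A = #|(S :\ 0) :&: W|.
  apply: eq_card => c; rewrite !inE.
  have [-> | _] := eqVneq c 0; last by rewrite andbC.
  by rewrite hweight0 mem0v eq_sym eqn0Ngt n_gt0.
rewrite [#|S|](cardsD1 0) inE mem0v -(cardsID W (S :\ 0)).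
by rewrite addnC [(_ + #|_ :\: _|)%N]addnC addnA.
Qed.

Lemma card_degenerate_codeword_matrices_ge :
  ((#|F| ^ s).-1 * #|low_weight_codewords|
    <= #|degenerate_codeword_matrices| * #|F|.-1)%N.
Proof.
pose D := setX [set a : 'cV[F]_s | a != 0] low_weight_codewords.
have -> : ((#|F| ^ s).-1 * #|low_weight_codewords|)%N = #|D|.
  rewrite cardsX -[s in (_ ^ s)%N]muln1 -card_mx -(cardC1 (0 : 'cV[F]_s)).
  by congr (_ * _)%N; apply: eq_card => a; rewrite !inE.
have -> : (#|degenerate_codeword_matrices| * #|F|.-1)%N =
    #|setX degenerate_codeword_matrices [set x : F | x != 0]|.
  rewrite cardsX -(cardC1 (0 : F)); congr (_ * _)%N.
  by apply: eq_card => x; rewrite !inE.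
rewrite -(@card_in_imset _ _ (@rank_one_code F s n)); last first.
  move=> [a c] [a' c']; rewrite !inE /= => /andP [a0 /and3P [_ c0 _]] _.
  exact: rank_one_code_inj.
apply: subset_leq_card; apply/subsetP => y /imsetP [[a c]].
rewrite !inE /= => /andP [a0 /and3P [cA c0 wc]] -> {y}.
have [i [j cj0]] := mx_neq0_entry c0; rewrite (ord1 i) in cj0.
have [j' cj'] := hweight_lt_zero_entry wc.
rewrite /rank_one_code /= pivot_mul_col_row //; apply/andP; split; [apply/and3P; split |].
- by apply/forallP => k; rewrite row_mul_col_row memvZ.
- by apply/forallPn; exists j'; rewrite negbK col_mul_col_row cj' scale0r.
- have : c 0 j *: a != 0 by rewrite scaler_eq0 negb_or cj0 a0.
  by apply: contraNneq => M0; rewrite -col_mul_col_row M0 col0.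
- by case: pickP => [k | /(_ j)]; rewrite ?cj0.
Qed.

Lemma card_rows_in_ge : (0 < n)%N ->
  (#|[set E : 'M[F]_(s, n) | no_zero_col E && rows_in A E]|
    + #|degenerate_codeword_matrices| + 1
    <= #|[set E : 'M[F]_(s, n) | rows_in A E]|)%N.
Proof.
move=> n_gt0.
set R := [set E : 'M[F]_(s, n) | rows_in A E].
set D := [set E : 'M[F]_(s, n) | no_zero_col E].
rewrite -(cardsID D R).
have -> : #|[set E : 'M[F]_(s, n) | no_zero_col E && rows_in A E]| = #|R :&: D|.
  by apply: eq_card => E; rewrite !inE andbC.
rewrite -addnA leq_add2l [#|R :\: D|](cardsD1 0).
have -> : (0 : 'M[F]_(s, n)) \in R :\: D.
  rewrite !inE; apply/andP; split.
    by apply/forallPn; exists (Ordinal n_gt0); rewrite negbK col0.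
  by apply/forallP => i; rewrite row0 mem0v.
rewrite addnC leq_add2l; apply: subset_leq_card; apply/subsetP => E.
by rewrite !inE => /and3P [-> -> ->].
Qed.

End Counting.

Lemma full_weight_count0 (F : finFieldType) (A : {vspace 'rV[F]_0}) :
  full_weight_count A = 1%N.
Proof.
rewrite /full_weight_count (_ : [set c | _] = setT) ?cardsT ?card_mx //.
apply/setP => c; rewrite !inE (thinmx0 c) mem0v /=.
by rewrite -leqn0 /hweight (leq_trans (max_card _)) ?card_ord.
Qed.

Lemma prob_rows_in0 (F : finFieldType) s (A : {vspace 'rV[F]_0}) :
  prob_rows_in s A = 1.
Proof.
have nzc (E : 'M[F]_(s, 0)) : no_zero_col E by apply/forallP => -[].
have rin (E : 'M[F]_(s, 0)) : rows_in A E.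
  by apply/forallP => i; rewrite (thinmx0 (row i E)) mem0v.
rewrite /prob_rows_in (_ : [set E | _ && _] = [set E | no_zero_col E]).
  by rewrite divff // pnatr_eq0 -lt0n; apply/card_gt0P; exists 0; rewrite inE.
by apply/setP => E; rewrite !inE rin andbT.
Qed.

Lemma ratio_bound (R : realFieldType) (q S g b z X d D : R) :
  1 < q -> 0 < D -> D <= d -> 0 <= g -> g + b + 1 <= X ->
  (S - 1) * z <= b * (q - 1) ->
  g / d <= (X * (q - 1) - (S - 1) * z - (q - 1)) / ((q - 1) * D).
Proof.
move=> q1 D0 Dd g0 gbX zb.
apply: (@le_trans _ _ (g / D)).
  by apply: ler_wpM2l => //; rewrite lef_pV2 ?posrE // (lt_le_trans D0).
rewrite invfM mulrA ler_pM2r ?invr_gt0 // ler_pdivlMr ?subr_gt0 //; nra.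
Qed.

Theorem mainTheorem18 (F : finFieldType) (s n k : nat)
  (A : {vspace 'rV[F]_n}) :
  (1 <= s)%N -> (k <= n)%N -> \dim A = k ->
  let q : rat := (#|F|)%:R in
  let An : rat := (full_weight_count A)%:R in
  prob_rows_in s A <=
    (q ^+ (k * s) * (q - 1) - (q ^+ s - 1) * (q ^+ k - 1 - An) - (q - 1))
    / ((q - 1) * (q ^+ s - 1) ^+ n).
Proof.
move=> s_gt0 kn dimA /=.
set q : rat := (#|F|)%:R; set An : rat := (full_weight_count A)%:R.
have F_gt1 : (1 < #|F|)%N := finNzRing_gt1 F.
have q_gt1 : 1 < q by rewrite ltr1n.
have qS : q <= q ^+ s by rewrite ler_eXnr // ltW.
have [n0 | n_gt0] := posnP n.
  subst n; move: kn; rewrite leqn0 => /eqP ->.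
  rewrite prob_rows_in0 /An full_weight_count0 mul0n !expr0 mulr1.
  by rewrite ler_pdivlMr ?subr_gt0 //; lra.
have natrB1 m : (0 < m)%N -> (m.-1)%:R = m%:R - 1 :> rat.
  by move=> m_gt0; rewrite -subn1 natrB.
have -> : q ^+ k - 1 - An = #|low_weight_codewords A|%:R.
  by rewrite /An -dimA -natrX -(card_low_weight_codewords A n_gt0) !natrD; lra.
apply: (ratio_bound (b := #|degenerate_codeword_matrices s A|%:R) q_gt1) => //.
- by rewrite exprn_gt0 // subr_gt0 (lt_le_trans q_gt1).
- move: (card_no_zero_col_ge F s n); rewrite -(ler_nat rat) natrX.
  by rewrite natrB1 ?expn_gt0 ?(ltnW F_gt1) // natrX; apply.
- move: (leq_trans (card_rows_in_ge s A n_gt0) (card_rows_in_le s A)).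
  by rewrite -(ler_nat rat) -expnM dimA !natrD natrX.
- move: (card_degenerate_codeword_matrices_ge s A); rewrite -(ler_nat rat) !natrM.
  by rewrite !natrB1 ?expn_gt0 ?(ltnW F_gt1) // natrX.
Qed.
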